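(* Let $\Gamma$ be a weighted digraph with Kirchhoff matrix $L$, out-forest dimension $d$, and normalized matrix of maximum out-forests $\bar J$. Then $\operatorname{rank}\bar J=d$, $\bar J^2=\bar J$, and $L\bar J=\bar J L=0$.
   Context: A weighted digraph $\Gamma$ has vertex set $\{1,\dots,n\}$, no loops, and each arc $j\to i$ ($j\ne i$) has a positive weight $a_{ij}$; $a_{ij}=0$ if there is no such arc. Its Kirchhoff matrix $L=[\ell_{ij}]$ has $\ell_{ij}=-a_{ij}$ for $j\ne i$ and $\ell_{ii}=\sum_{k\ne i}a_{ik}$. A diverging tree is a rooted directed tree with directed paths from its root to all its other vertices; an out-forest of $\Gamma$ is a spanning subgraph whose weak components are diverging trees; a maximum out-forest is an out-forest with the maximum number of arcs; the out-forest dimension $d$ is the number of trees in a maximum out-forest. The weight of a subgraph is the product of the weights of its arcs. The normalized matrix of maximum out-forests $\bar J=[\bar J_{ij}]$ is defined by: $\bar J_{ij}$ equals the total weight of those maximum out-forests of $\Gamma$ in which vertex $i$ belongs to the tree whose root is $j$, divided by the total weight of all maximum out-forests of $\Gamma$. *)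

From HB Require Import structures.
From mathcomp Require Import all_boot all_order all_algebra.
Set Implicit Arguments. Unset Strict Implicit. Unset Printing Implicit Defensive.
Import Order.TTheory GRing.Theory Num.Theory.
Local Open Scope ring_scope.

Section Digraph.
Variables (R : realFieldType) (n : nat) (a : 'M[R]_n).

(* A weighted digraph on 'I_n: arc j -> i (j != i) iff a i j <> 0 (weights
   are assumed positive on arcs, i.e. nonnegative off the diagonal).
   An arc j -> i is represented by the pair (j, i). *)
Definition arcs : {set 'I_n * 'I_n} :=
  [set e | (e.1 != e.2) && (a e.2 e.1 != 0)].

Definition kirchhoff : 'M[R]_n :=
  \matrix_(i, j) if i == j then \sum_(k | k != i) a i k else - a i j.

Definition frel_of (F : {set 'I_n * 'I_n}) : rel 'I_n :=
  fun x y => (x, y) \in F.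

(* F is an out-forest: a spanning subgraph of the digraph whose weak
   components are diverging trees; equivalently every vertex has in-degree
   at most one in F and F has no directed cycle. *)
Definition out_forest (F : {set 'I_n * 'I_n}) : bool :=
  [&& F \subset arcs,
      [forall i : 'I_n, #|[set e in F | e.2 == i]| <= 1]%N &
      [forall e in F, ~~ connect (frel_of F) e.2 e.1]].

Definition roots_of (F : {set 'I_n * 'I_n}) : {set 'I_n} :=
  [set v | [forall e in F, e.2 != v]].

Definition in_tree_of (F : {set 'I_n * 'I_n}) (i j : 'I_n) : bool :=
  (j \in roots_of F) && connect (frel_of F) j i.

Definition max_out_forest (F : {set 'I_n * 'I_n}) : bool :=
  out_forest F &&
  [forall F' : {set 'I_n * 'I_n}, out_forest F' ==> (#|F'| <= #|F|)%N].

Definition weight (F : {set 'I_n * 'I_n}) : R := \prod_(e in F) a e.2 e.1.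

Definition Jbar : 'M[R]_n :=
  \matrix_(i, j)
    ((\sum_(F : {set 'I_n * 'I_n} | max_out_forest F && in_tree_of F i j) weight F)
     / (\sum_(F : {set 'I_n * 'I_n} | max_out_forest F) weight F)).

End Digraph.

From HB Require Import structures.
From mathcomp Require Import all_boot all_order all_algebra.
Import Order.TTheory GRing.Theory Num.Theory.
Set Implicit Arguments. Unset Strict Implicit. Unset Printing Implicit Defensive.

(* Write sigma for the total weight of the maximum out-forests and W i j for the
   weight of those in which i lies in the tree rooted at j, so that
   Jbar = W / sigma; the rows of Jbar sum to 1 and those of L to 0.  Replacing
   the arc entering a vertex of a maximum out-forest by another arc of the
   digraph (regrafting), or turning a tree around so that it is rooted at a
   predecessor of its root (rerooting), yields again maximum out-forests.  These
   exchanges are weight-preserving injections, which give (L W) i j <= 0 and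
   (W L) i j >= 0; together with the row sums this forces L Jbar = Jbar L = 0.
   By a maximum principle, a vector killed by L that vanishes on the roots of a
   maximum out-forest is zero; applied to the columns of Jbar^2 - Jbar this
   gives idempotence.  Finally the rank of an idempotent matrix is its trace,
   here the number of roots. *)

Lemma setU1D1_inj (T : finType) (A B : {set T}) e e' :
  e \in A -> e \in B -> e' \notin A :\ e -> e' \notin B :\ e ->
  e' |: (A :\ e) = e' |: (B :\ e) -> A = B.
Proof.
move=> eA eB e'A e'B /(congr1 (fun X => X :\ e')).
by rewrite !setU1K // => /(congr1 (fun X => e |: X)); rewrite !setD1K.
Qed.

Section Forest.
Variable n : nat.
Implicit Types (F G : {set 'I_n * 'I_n}) (x y z u v p j k : 'I_n).
Local Notation reach F := (connect (frel_of F)).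

Lemma reach_ind F (P : 'I_n -> Prop) x :
  P x -> (forall y z, reach F x y -> (y, z) \in F -> P y -> P z) ->
  forall y, reach F x y -> P y.
Proof.
move=> Px step y /connectP [q pq ->] {y}.
elim/last_ind: q pq => //= q z IH; rewrite rcons_path last_rcons => /andP [pq yz].
apply: step yz (IH pq); apply/connectP; exists q => //.
Qed.

Lemma reach_rcons F x y z : reach F x y -> (y, z) \in F -> reach F x z.
Proof. by move=> rxy yz; apply: connect_trans rxy (connect1 _). Qed.

Lemma reach_subset F G x y : F \subset G -> reach F x y -> reach G x y.
Proof. by move=> sFG; apply: connect_sub => u v uv; apply/connect1/(subsetP sFG). Qed.

Lemma reach_pred F x y : reach F x y -> x != y ->
  exists2 p, (p, y) \in F & reach F x p.
Proof.
by move: y; apply: reach_ind => [|y z rxy yz _ _]; [rewrite eqxx | exists y].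
Qed.

Definition in_deg_le1 F := forall x y z, (x, z) \in F -> (y, z) \in F -> x = y.
Definition acyclic F := forall x y, (x, y) \in F -> ~~ reach F y x.

Lemma rootsP F v : reflect (forall u, (u, v) \notin F) (v \in roots_of F).
Proof.
rewrite inE; apply: (iffP forall_inP) => [rv u | rv [x y] xy].
  by apply/negP => /rv /=; rewrite eqxx.
by apply: contraNneq (rv x) => /= <-.
Qed.

Lemma reach_root F x j : j \in roots_of F -> reach F x j -> x = j.
Proof.
move=> /rootsP rj rxj; apply/eqP/negPn/negP => /(reach_pred rxj) [p pj _].
by move: (rj p); rewrite pj.
Qed.

Lemma reach_comparable F u w x : in_deg_le1 F -> reach F u x -> reach F w x ->
  reach F u w || reach F w u.
Proof.
move=> d1; move: x; apply: reach_ind => [rwu|y z ruy yz IH rwz]; first by rewrite rwu orbT.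
have [->|nwz] := eqVneq w z; first by rewrite (reach_rcons ruy yz).
by case: (reach_pred rwz nwz) => q /d1 /(_ yz) -> /IH.
Qed.

Lemma exists_root_reach F i : acyclic F -> exists2 j, j \in roots_of F & reach F j i.
Proof.
move=> ac; pose anc y := [set z | reach F z y].
case: (@arg_minnP _ i (fun y => reach F y i) (fun y => #|anc y|) (connect0 _ i)).
move=> j rji jmin; exists j => //; apply/rootsP => p; apply/negP => pj.
have /jmin : reach F p i by apply: connect_trans (connect1 pj) rji.
apply/negP; rewrite -ltnNge; apply/proper_card/properP; split.
  by apply/subsetP => z; rewrite !inE => rzp; apply: reach_rcons rzp pj.
by exists j; rewrite inE ?connect0 ?ac.
Qed.

Lemma in_tree_of_uniq F i j j' : in_deg_le1 F ->
  in_tree_of F i j -> in_tree_of F i j' -> j = j'.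
Proof.
move=> d1 /andP [rj rji] /andP [rj' rj'i].
by case/orP: (reach_comparable d1 rji rj'i) => [/(reach_root rj') | /(reach_root rj)].
Qed.

Lemma in_tree_of_exists F i : acyclic F -> exists j, in_tree_of F i j.
Proof. by case/(exists_root_reach i) => j rj rji; exists j; apply/andP. Qed.

Lemma in_tree_of_reach F x y j : in_tree_of F x j -> reach F x y -> in_tree_of F y j.
Proof. by move=> /andP [rj rjx] rxy; rewrite /in_tree_of rj (connect_trans rjx rxy). Qed.

Lemma in_tree_of_root F j : j \in roots_of F -> in_tree_of F j j.
Proof. by move=> rj; rewrite /in_tree_of rj connect0. Qed.

Lemma acyclicU1 F u v : acyclic F -> ~~ reach F v u -> acyclic ((u, v) |: F).
Proof.
move=> ac nvu; set G := (u, v) |: F.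
have reachG y z : reach G y z -> reach F y z || reach F v z.
  move: z; apply: reach_ind; first by rewrite connect0.
  move=> z z' _; rewrite !inE => /orP [/eqP [-> ->]|zz'] IH; first by rewrite connect0 orbT.
  by case/orP: IH => r; rewrite (reach_rcons r zz') ?orbT.
have reachG_from_v y z : reach F v y -> reach G y z -> reach F y z.
  move=> rvy rG; suff /andP [] : reach F y z && reach F v z by [].
  move: z rG; apply: reach_ind; first by rewrite connect0 rvy.
  move=> z z' _; rewrite !inE => /orP [/eqP [-> ->]|zz'] /andP [ryz rvz].
    by rewrite rvz in nvu.
  by rewrite (reach_rcons ryz zz') (reach_rcons rvz zz').
move=> x y; rewrite !inE => /orP [/eqP [-> ->]|xy]; apply/negP => ryx.
  by move: (reachG_from_v _ _ (connect0 _ v) ryx); rewrite (negbTE nvu).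
case rvy: (reach F v y); first by move: (ac _ _ xy); rewrite (reachG_from_v _ _ rvy ryx).
case/orP: (reachG _ _ ryx) => r; first by move: (ac _ _ xy); rewrite r.
by rewrite (reach_rcons r xy) in rvy.
Qed.

Lemma reach_setD1 F p v y x : ~~ reach F v x -> reach F y x -> reach (F :\ (p, v)) y x.
Proof.
move=> nvx ryx; suff : reach F v x || reach (F :\ (p, v)) y x by rewrite (negbTE nvx).
move: x ryx {nvx}; apply: reach_ind; first by rewrite connect0 orbT.
move=> z z' _ zz' /orP [rvz|ryz]; first by rewrite (reach_rcons rvz zz').
have [->|nz'v] := eqVneq z' v; first by rewrite connect0.
by rewrite (reach_rcons ryz) ?orbT // !inE zz' andbT; apply: contra nz'v => /eqP [_ ->].
Qed.

Lemma reach_setD1_head F p v x : acyclic F -> (p, v) \in F -> reach F v x ->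
  reach (F :\ (p, v)) v x.
Proof.
move=> ac pv rvx; suff /andP [] : reach F v x && reach (F :\ (p, v)) v x by [].
move: x rvx; apply: reach_ind; first by rewrite !connect0.
move=> z z' _ zz' /andP [rvz r'vz]; rewrite (reach_rcons rvz zz') /=.
have [[E1 E2]|ne] := eqVneq (z, z') (p, v).
  by subst; move: (ac _ _ pv); rewrite rvz.
by rewrite (reach_rcons r'vz) // !inE ne.
Qed.

Lemma child_reach_uniq F c k1 k2 p : in_deg_le1 F -> acyclic F ->
  (c, k1) \in F -> (c, k2) \in F -> reach F k1 p -> reach F k2 p -> k1 = k2.
Proof.
move=> d1 ac ck1 ck2 r1 r2.
wlog r12 : k1 k2 ck1 ck2 {r1 r2} / reach F k1 k2.
  by move=> H; case/orP: (reach_comparable d1 r1 r2) => r; [|symmetry]; apply: H.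
apply/eqP/negPn/negP => /(reach_pred r12) [q /d1 /(_ ck2) -> rk1c].
by move: (ac _ _ ck1); rewrite rk1c.
Qed.

Definition parent F v := odflt v [pick u | (u, v) \in F].

Lemma parentE F u v : in_deg_le1 F -> (u, v) \in F -> parent F v = u.
Proof.
move=> d1 uv; rewrite /parent; case: pickP => [x xv|none] /=; first exact: d1 xv uv.
by move: (none u); rewrite uv.
Qed.

Lemma parent_in F v : v \notin roots_of F -> (parent F v, v) \in F.
Proof.
rewrite /parent; case: pickP => [x xv //|none].
by case/negP; apply/rootsP => u; rewrite none.
Qed.

End Forest.

Section OutForest.
Variables (R : realFieldType) (n : nat) (a : 'M[R]_n).
Implicit Types (F G : {set 'I_n * 'I_n}) (x y z u v p j k : 'I_n).
Local Notation reach F := (connect (frel_of F)).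

Lemma out_forestP F :
  reflect [/\ F \subset arcs a, in_deg_le1 F & acyclic F] (out_forest a F).
Proof.
apply: (iffP and3P) => [[sF /forallP d1 /forall_inP ac] | [sF d1 ac]].
  split=> // [x y z xz yz | x y xy]; last exact: (ac (x, y)).
  have /card_le1_eqP /(_ (x, z) (y, z)) := d1 z.
  by rewrite !inE xz yz !eqxx => /(_ isT isT) [].
split=> //; last by apply/forall_inP => [[x y]] /ac.
apply/forallP => i; apply/card_le1_eqP => [[x1 x2]] [y1 y2].
by rewrite !inE /= => /andP [e1 /eqP E1] /andP [e2 /eqP E2]; subst; rewrite (d1 _ _ _ e1 e2).
Qed.

Lemma out_forest_subset F G : out_forest a F -> G \subset F -> out_forest a G.
Proof.
move=> /out_forestP [sF d1 ac] sGF; apply/out_forestP; split.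
- exact: subset_trans sGF sF.
- by move=> x y z /(subsetP sGF) xz /(subsetP sGF) yz; apply: d1 xz yz.
- by move=> x y /(subsetP sGF) /ac; apply: contra; apply: reach_subset.
Qed.

Lemma out_forest0 : out_forest a set0.
Proof. by apply/out_forestP; split=> [|x y z|x y]; rewrite ?sub0set ?inE. Qed.

Lemma card_roots_out_forest F : out_forest a F -> #|roots_of F| + #|F| = n.
Proof.
case/out_forestP => _ d1 _.
have inj : {in F &, injective (fun e : 'I_n * 'I_n => e.2)}.
  by move=> [x z] [y w] /= xz yw E; subst; rewrite (d1 _ _ _ xz yw).
rewrite -(card_in_imset inj).
have -> : [set e.2 | e in F] = ~: roots_of F.
  apply/setP => w; rewrite in_setC; apply/imsetP/idP.
    by case=> [[x z]] xz /= ->; apply/negP => /rootsP /(_ x); rewrite xz.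
  by move/parent_in => pw; exists (parent F w, w).
by rewrite cardsC card_ord.
Qed.

Section RemoveArc.
Variables (F : {set 'I_n * 'I_n}) (p v : 'I_n).
Hypotheses (fF : out_forest a F) (pv : (p, v) \in F).
Let F' := F :\ (p, v).

Lemma out_forestD1 : out_forest a F'.
Proof. by apply: out_forest_subset fF _; apply: subD1set. Qed.

Lemma root_setD1 : v \in roots_of F'.
Proof.
case/out_forestP: fF => _ d1 _; apply/rootsP => u; rewrite !inE negb_and negbK.
by case uv: ((u, v) \in F); rewrite ?(d1 _ _ _ uv pv) ?eqxx ?orbT.
Qed.

Lemma roots_setD1 j : j \in roots_of F -> j \in roots_of F'.
Proof. by move=> /rootsP rj; apply/rootsP => u; rewrite !inE (negbTE (rj u)) andbF. Qed.

Lemma in_tree_of_setD1 x j : in_tree_of F x j -> ~~ reach F v x -> in_tree_of F' x j.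
Proof. by move=> /andP [rj rjx] nvx; rewrite /in_tree_of roots_setD1 // reach_setD1. Qed.

Lemma in_tree_of_setD1_head x : reach F v x -> in_tree_of F' x v.
Proof.
by case/out_forestP: fF => _ _ ac rvx; rewrite /in_tree_of root_setD1 reach_setD1_head.
Qed.
End RemoveArc.

Section AddArc.
Variables (F : {set 'I_n * 'I_n}) (u v : 'I_n).
Hypotheses (fF : out_forest a F) (rv : v \in roots_of F) (uv : (u, v) \in arcs a)
  (nvu : ~~ reach F v u).
Let G := (u, v) |: F.

Lemma out_forestU1 : out_forest a G.
Proof.
case/out_forestP: fF => sF d1 ac; apply/out_forestP; split.
- by rewrite subUset sub1set uv.
- move/rootsP: rv => rv' x y z; rewrite !inE => /orP [/eqP E1|xz] /orP [/eqP E2|yz].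
  + by case: E1 E2 => -> _ [-> _].
  + by case: E1 => _ E; subst; move: (rv' y); rewrite yz.
  + by case: E2 => _ E; subst; move: (rv' x); rewrite xz.
  + exact: d1 xz yz.
- exact: acyclicU1.
Qed.

Lemma card_setU1_root : #|G| = #|F|.+1.
Proof. by rewrite cardsU1; move/rootsP: rv => /(_ u) ->. Qed.

Lemma roots_setU1 j : j \in roots_of F -> j != v -> j \in roots_of G.
Proof.
move=> /rootsP rj njv; apply/rootsP => w; rewrite !inE negb_or (rj w) andbT.
by apply: contra njv => /eqP [_ ->].
Qed.

Lemma in_tree_of_setU1 x j : in_tree_of F x j -> j != v -> in_tree_of G x j.
Proof.
move=> /andP [rj rjx] njv; rewrite /in_tree_of roots_setU1 //=.
by apply: reach_subset rjx; apply: subsetUr.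
Qed.

Lemma in_tree_of_setU1_graft x j : reach F v x -> in_tree_of F u j -> in_tree_of G x j.
Proof.
move=> rvx /andP [rj rju].
have njv : j != v by apply: contra nvu => /eqP <-.
rewrite /in_tree_of roots_setU1 //=.
apply: connect_trans (reach_subset (subsetUr _ _) rju) _.
apply: connect_trans (connect1 _) (reach_subset (subsetUr _ _) rvx).
by rewrite /frel_of !inE eqxx.
Qed.
End AddArc.

Lemma weight_exchange F e e' : e \in F -> e' \notin F :\ e ->
  (a e.2 e.1 * weight a (e' |: (F :\ e)) = a e'.2 e'.1 * weight a F)%R.
Proof. by move=> eF e'F; rewrite /weight big_setU1 //= (big_setD1 e eF) mulrCA. Qed.

End OutForest.

Section MaxOutForest.
Variables (R : realFieldType) (n : nat) (a : 'M[R]_n).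
Implicit Types (F G : {set 'I_n * 'I_n}) (x y z u v p j k c l : 'I_n).
Local Notation reach F := (connect (frel_of F)).
Local Notation MF := (max_out_forest a).

Lemma max_out_forest_out F : MF F -> out_forest a F.
Proof. by case/andP. Qed.

Lemma max_out_forest_max F G : MF F -> out_forest a G -> (#|G| <= #|F|)%N.
Proof. by case/andP => _ /forallP /(_ G) /implyP. Qed.

Lemma max_out_forest_same_card F G : MF F -> out_forest a G -> #|G| = #|F| -> MF G.
Proof.
move=> mF fG cG; rewrite /max_out_forest fG cG /=.
by apply/forallP => H; apply/implyP; apply: max_out_forest_max.
Qed.

Lemma card_max_out_forest F G : MF F -> MF G -> #|F| = #|G|.
Proof.
move=> mF mG; apply/eqP; rewrite eqn_leq.
by rewrite !max_out_forest_max ?max_out_forest_out.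
Qed.

Lemma max_out_forest_exists : exists F, MF F.
Proof.
case: (@arg_maxnP _ set0 (out_forest a) (fun F => #|F|) (out_forest0 a)) => F fF Fmax.
exists F; rewrite /max_out_forest fF /=.
by apply/forallP => G; apply/implyP => /Fmax.
Qed.

Section Regraft.
Variables (F : {set 'I_n * 'I_n}) (p v u : 'I_n).
Hypotheses (mF : MF F) (pv : (p, v) \in F) (uv : (u, v) \in arcs a)
  (nvu : ~~ reach F v u).
Let F' := F :\ (p, v).
Let fF := max_out_forest_out mF.
Let rv : v \in roots_of F' := root_setD1 fF pv.
Let nvu' : ~~ reach F' v u.
Proof. by apply: contra nvu; apply: reach_subset; apply: subD1set. Qed.

Lemma regraft_max : MF ((u, v) |: F').
Proof.
apply: max_out_forest_same_card mF (out_forestU1 (out_forestD1 p v fF) rv uv nvu') _.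
by rewrite (card_setU1_root u rv) (cardsD1 (p, v) F) pv.
Qed.

Lemma regraft_in_tree_of x j : in_tree_of F x j -> ~~ reach F v x ->
  in_tree_of ((u, v) |: F') x j.
Proof.
move=> tj nvx; apply: (in_tree_of_setU1 u); first exact: in_tree_of_setD1.
by case/andP: tj => /rootsP rj _; apply: contraTneq pv => <-; apply: rj.
Qed.

Lemma regraft_in_tree_of_graft x j : reach F v x -> in_tree_of F u j ->
  in_tree_of ((u, v) |: F') x j.
Proof.
move=> rvx tj; apply: (in_tree_of_setU1_graft nvu'); last exact: in_tree_of_setD1.
by case/out_forestP: fF => _ _ ac; apply: reach_setD1_head.
Qed.
End Regraft.

Section Reroot.
Variables (F : {set 'I_n * 'I_n}) (p c k : 'I_n).
Hypotheses (mF : MF F) (rk : k \in roots_of F) (ck : (c, k) \in arcs a)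
  (pc : (p, c) \in F).
Let F' := F :\ (p, c).
Let fF := max_out_forest_out mF.
Let rc : c \in roots_of F' := root_setD1 fF pc.
Let rk' : k \in roots_of F' := roots_setD1 p c rk.
Let nck : c != k.
Proof. by move: ck; rewrite inE => /andP []. Qed.
Let nkc' : ~~ reach F' k c.
Proof. by apply/negP => /(reach_root rc) E; move: nck; rewrite E eqxx. Qed.

Lemma reroot_max : MF ((c, k) |: F').
Proof.
apply: max_out_forest_same_card mF (out_forestU1 (out_forestD1 p c fF) rk' ck nkc') _.
by rewrite (card_setU1_root c rk') (cardsD1 (p, c) F) pc.
Qed.

Lemma reroot_in_tree_of x : in_tree_of F x k -> in_tree_of ((c, k) |: F') x c.
Proof.
move=> tk; case rcx: (reach F c x).
  exact: (in_tree_of_setU1 c) (in_tree_of_setD1_head fF pc rcx) nck.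
have /andP [_ r'kx] := in_tree_of_setD1 p tk (negbT rcx).
exact: (in_tree_of_setU1_graft nkc' r'kx (in_tree_of_root rc)).
Qed.
End Reroot.

(* Induction along a path l -> l' -> ... -> j of the digraph: regrafting l'
   under l keeps the forest maximum, and l' then lies in the tree of j in both
   forests, which forces the root of l to be j. *)
Lemma max_out_forest_root_reach l j : reach (arcs a) l j ->
  forall F, MF F -> j \in roots_of F -> reach F j l.
Proof.
move=> /connectP [q pq E].
elim: q l pq E => [|l' q IH] l /=; first by move=> _ -> F _ _; apply: connect0.
move=> /andP [ll' pq] E F mF rj; have rjl' := IH l' pq E F mF rj.
apply/negPn/negP => nrjl; have fF := max_out_forest_out mF.
have [Ej|nl'j] := eqVneq l' j.
  subst l'; have := max_out_forest_max mF (out_forestU1 fF rj ll' nrjl).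
  by rewrite (card_setU1_root l rj) ltnn.
have [p pl' _] : exists2 p, (p, l') \in F & reach F j p.
  by apply: reach_pred rjl' _; rewrite eq_sym.
have nl'l : ~~ reach F l' l by apply: contra nrjl; apply: connect_trans rjl'.
pose G := (l, l') |: (F :\ (p, l')).
have mG : MF G := regraft_max mF pl' ll' nl'l.
have rjG : j \in roots_of G.
  have : in_tree_of G j j.
    apply: regraft_in_tree_of => //; first exact: in_tree_of_root.
    by apply: contraNN nl'j => /(reach_root rj) ->.
  by case/andP.
have tl'G : in_tree_of G l' j by rewrite /in_tree_of rjG IH.
case/out_forestP: fF => _ _ ac; case: (in_tree_of_exists l ac) => rho trho.
case/out_forestP: (max_out_forest_out mG) => _ d1G _.
have := regraft_in_tree_of_graft mF pl' nl'l (connect0 _ l') trho.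
move=> /(in_tree_of_uniq d1G tl'G) Erho; subst rho.
by case/andP: trho => _; apply/negP.
Qed.

Lemma card_roots_max_out_forest F G : MF F -> MF G -> #|roots_of F| = #|roots_of G|.
Proof.
move=> mF mG; apply/(@addIn #|F|); rewrite {2}(card_max_out_forest mF mG).
by rewrite !(card_roots_out_forest (a := a)) ?max_out_forest_out.
Qed.

Lemma max_out_forest_same_tree F0 G j l c : MF F0 -> j \in roots_of F0 ->
  reach (arcs a) l j -> MF G -> in_tree_of G l c = in_tree_of G j c.
Proof.
move=> m0 rj rlj mG; case/out_forestP: (max_out_forest_out m0) => s0 _ _.
case/out_forestP: (max_out_forest_out mG) => sG d1 ac.
have [rho tjr] := in_tree_of_exists j ac; have /andP [rrho rrhoj] := tjr.
have rjr : reach (arcs a) j rho.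
  exact/(reach_subset s0)/(max_out_forest_root_reach (reach_subset sG rrhoj) m0 rj).
have tlr : in_tree_of G l rho.
  by rewrite /in_tree_of rrho (max_out_forest_root_reach (connect_trans rlj rjr) mG rrho).
by apply/idP/idP => t; [rewrite -(in_tree_of_uniq d1 tlr t) | rewrite -(in_tree_of_uniq d1 tjr t)].
Qed.

End MaxOutForest.

Local Open Scope ring_scope.

Section Sums.
Variable R : realFieldType.

Lemma sumr_mul_bool (I : finType) (P b : pred I) (f : I -> R) :
  \sum_(i | P i) f i * (b i)%:R = \sum_(i | P i && b i) f i.
Proof. by rewrite big_mkcondr; apply: eq_bigr => i _; case: (b i); rewrite ?mulr1 ?mulr0. Qed.

Lemma ler_sum_inj (I J : finType) (P : pred I) (Q : pred J) (f : I -> R) (g : J -> R)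
    (h : I -> J) :
  (forall j, Q j -> 0 <= g j) -> {in [pred i | P i && (f i != 0)] &, injective h} ->
  (forall i, P i -> f i != 0 -> Q (h i) /\ g (h i) = f i) ->
  \sum_(i | P i) f i <= \sum_(j | Q j) g j.
Proof.
move=> g0 hinj hP; rewrite (bigID (fun i => f i == 0)) /= big1 ?add0r; last first.
  by move=> i /andP [_ /eqP].
rewrite (eq_bigr (g \o h)) => [|i /andP [Pi /(hP i Pi) []] //].
rewrite -(big_imset _ hinj) /= big_mkcond [leRHS]big_mkcond /=.
apply: ler_sum => j; case: ifP => [/imsetP [i /andP [Pi nzi] ->]|_].
  by rewrite (proj1 (hP i Pi nzi)).
by case: ifP => // /g0.
Qed.

Lemma mx_ge0_row_sum0 m n (A : 'M[R]_(m, n)) :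
  (forall i j, 0 <= A i j) -> (forall i, \sum_j A i j = 0) -> A = 0.
Proof.
move=> A0 rs; apply/matrixP => i j; rewrite mxE.
by apply: (psumr_eq0P (P := predT)) (rs i) _ _ => // k _.
Qed.

Lemma mxrank_idem n (A : 'M[R]_n) : A *m A = A -> (\rank A)%:R = \tr A.
Proof.
move=> AA; rewrite -[X in _ = \tr X]mulmx_base mxtrace_mulC.
move: (col_base A) (row_base A) (col_base_full A) (row_base_free A) (mulmx_base A).
move=> C B fC fB E; suff -> : B *m C = 1%:M by rewrite mxtrace1.
apply: (row_free_inj fB); apply: (row_full_inj fC).
by rewrite mul1mx E !mulmxA E -mulmxA E AA.
Qed.

End Sums.

Section Kirchhoff.
Variables (R : realFieldType) (n : nat) (a : 'M[R]_n).
Hypothesis ha : forall i j : 'I_n, i != j -> 0 <= a i j.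
Implicit Types (F G H : {set 'I_n * 'I_n}) (x y z u v p j k c l i : 'I_n).
Local Notation reach F := (connect (frel_of F)).
Local Notation MF := (max_out_forest a).
Local Notation L := (kirchhoff a).

Definition forests_weight := \sum_(F | MF F) weight a F.
Definition tree_weight i j := \sum_(F | MF F) weight a F * (in_tree_of F i j)%:R.

Lemma arc_gt0 u v : (u, v) \in arcs a -> 0 < a v u.
Proof. by rewrite inE => /andP [uv nz]; rewrite lt_def nz ha // eq_sym. Qed.

Lemma weight_gt0 F : out_forest a F -> 0 < weight a F.
Proof. by case/out_forestP => sF _ _; apply: prodr_gt0 => [[u v]] /(subsetP sF) /arc_gt0. Qed.

Lemma forests_weight_gt0 : 0 < forests_weight.
Proof.
have [F0 m0] := max_out_forest_exists a.
rewrite /forests_weight (bigD1 F0) //= ltr_wpDr ?weight_gt0 ?max_out_forest_out //.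
by apply: sumr_ge0 => F /andP [/max_out_forest_out /weight_gt0 /ltW].
Qed.

Lemma JbarE i j : Jbar a i j = tree_weight i j / forests_weight.
Proof. by rewrite mxE /tree_weight sumr_mul_bool. Qed.

Lemma sum_in_tree_of F i : out_forest a F -> \sum_j ((in_tree_of F i j)%:R : R) = 1.
Proof.
case/out_forestP => _ d1 ac; have [j0 t0] := in_tree_of_exists i ac.
rewrite (bigD1 j0) //= t0 big1 ?addr0 // => j nj.
by case tj: (in_tree_of F i j); rewrite // (in_tree_of_uniq d1 tj t0) eqxx in nj.
Qed.

Lemma Jbar_row_sum i : \sum_j Jbar a i j = 1.
Proof.
under eq_bigr do rewrite JbarE.
rewrite -mulr_suml /tree_weight exchange_big /=.
rewrite (eq_bigr (weight a)) => [|F /max_out_forest_out fF]; last first.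
  by rewrite -mulr_sumr sum_in_tree_of ?mulr1.
by rewrite divff // gt_eqF // forests_weight_gt0.
Qed.

Lemma kirchhoffE i k :
  L i k = if i == k then \sum_(k' | k' != i) a i k' else - a i k.
Proof. by rewrite mxE. Qed.

Lemma kirchhoff_row_sum i : \sum_k L i k = 0.
Proof.
rewrite (bigD1 i) //= kirchhoffE eqxx.
under [X in _ + X]eq_bigr => k nki do rewrite kirchhoffE eq_sym (negbTE nki).
by rewrite sumrN subrr.
Qed.

Lemma regraftP i j k F : k != i -> a i k != 0 -> MF F ->
    in_tree_of F i j -> ~~ in_tree_of F k j ->
  let p := parent F i in let H := (k, i) |: (F :\ (p, i)) in
  [/\ (p, i) \in F, (k, i) \notin F :\ (p, i), p != i, MF H &
      in_tree_of H p j && ~~ in_tree_of H i j].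
Proof.
move=> nki aik mF tij ntkj p H; have fF := max_out_forest_out mF.
case/out_forestP: (fF) => sF d1 ac.
have ki : (k, i) \in arcs a by rewrite inE nki.
have nik : ~~ reach F i k by apply: contra ntkj; apply: in_tree_of_reach.
have pi : (p, i) \in F.
  by apply/parent_in; apply: contra nik => /(max_out_forest_root_reach (connect1 ki) mF).
have mH : MF H := regraft_max mF pi ki nik.
split=> //.
- by rewrite !inE negb_and negbK; case ki': ((k, i) \in F); rewrite ?(d1 _ _ _ ki' pi) ?eqxx ?orbT.
- by move: (subsetP sF _ pi); rewrite inE => /andP [].
apply/andP; split.
  apply: regraft_in_tree_of (ac _ _ pi) => //.
  have [rho tp] := in_tree_of_exists p ac.
  by rewrite (in_tree_of_uniq d1 tij (in_tree_of_reach tp (connect1 pi))).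
have [rho tk] := in_tree_of_exists k ac.
have tiH := regraft_in_tree_of_graft mF pi nik (connect0 _ i) tk.
case/out_forestP: (max_out_forest_out mH) => _ d1H _.
by apply: contra ntkj => /(in_tree_of_uniq d1H tiH) <-.
Qed.

(* Injective since k is recovered as the new parent of i. *)
Lemma regraft_weight_le i j :
  \sum_(q : 'I_n * {set 'I_n * 'I_n} | (q.1 != i) && MF q.2 &&
           (in_tree_of q.2 i j && ~~ in_tree_of q.2 q.1 j)) a i q.1 * weight a q.2
  <= \sum_(q : 'I_n * {set 'I_n * 'I_n} | (q.1 != i) && MF q.2 &&
           (in_tree_of q.2 q.1 j && ~~ in_tree_of q.2 i j)) a i q.1 * weight a q.2.
Proof.
apply: (ler_sum_inj (h := fun q => (parent q.2 i, (q.1, i) |: (q.2 :\ (parent q.2 i, i))))).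
- move=> [p H] /andP [/andP [npi /max_out_forest_out fH] _] /=.
  by rewrite mulr_ge0 ?ha 1?eq_sym // ltW // weight_gt0.
- move=> [k1 F1] [k2 F2]; rewrite !inE /= !mulf_eq0 !negb_or.
  move=> /and3P [/andP [/andP [nk1 m1] /andP [t1 nt1]] a1 _].
  move=> /and3P [/andP [/andP [nk2 m2] /andP [t2 nt2]] a2 _] [E1 E2].
  have [pi1 ni1 _ mH1 _] := regraftP nk1 a1 m1 t1 nt1.
  have [pi2 ni2 _ _ _] := regraftP nk2 a2 m2 t2 nt2.
  rewrite -E1 in pi2 ni2 E2.
  case/out_forestP: (max_out_forest_out mH1) => _ d1H _.
  have k12 : k1 = k2 by apply: (d1H _ _ i); [|rewrite E2]; apply: setU11.
  by subst k2; congr pair; apply: setU1D1_inj pi1 pi2 ni1 ni2 E2.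
- move=> [k F] /andP [/andP [nki mF] /andP [tij ntkj]]; rewrite mulf_eq0 negb_or.
  move=> /andP [aik _] /=.
  have [pi ni npi mH /andP [tpj ntij]] := regraftP nki aik mF tij ntkj.
  by rewrite npi mH tpj ntij; split=> //; apply: weight_exchange pi ni.
Qed.

Lemma kirchhoff_tree_weight_le0 i j : \sum_k L i k * tree_weight k j <= 0.
Proof.
have -> : \sum_k L i k * tree_weight k j =
    \sum_(k | k != i) a i k * (tree_weight i j - tree_weight k j).
  rewrite (bigD1 i) //= kirchhoffE eqxx mulr_suml.
  under [X in _ = X]eq_bigr do rewrite mulrBr.
  rewrite sumrB; congr (_ + _); rewrite -sumrN; apply: eq_bigr => k nki.
  by rewrite kirchhoffE eq_sym (negbTE nki) mulNr.
under eq_bigr => k _.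
  rewrite /tree_weight -sumrB mulr_sumr.
  under eq_bigr => F _.
    have -> : weight a F * (in_tree_of F i j)%:R - weight a F * (in_tree_of F k j)%:R =
        weight a F * (in_tree_of F i j && ~~ in_tree_of F k j)%:R -
        weight a F * (in_tree_of F k j && ~~ in_tree_of F i j)%:R.
      by case: (in_tree_of F i j); case: (in_tree_of F k j); rewrite ?subrr.
    rewrite mulrBr !mulrA; over.
  over.
rewrite pair_big /= sumrB !sumr_mul_bool subr_le0.
exact: regraft_weight_le.
Qed.

Lemma rerootP i c k G : k != c -> a k c != 0 -> MF G -> in_tree_of G i k ->
  let p := parent G c in let H := (c, k) |: (G :\ (p, c)) in
  [/\ (p, c) \in G, (c, k) \notin G :\ (p, c), p != c, MF H &
      in_tree_of H i c && reach H k p].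
Proof.
move=> nkc akc mG tik p H; case/out_forestP: (max_out_forest_out mG) => sG d1 ac.
have ck : (c, k) \in arcs a by rewrite inE eq_sym nkc.
have rk : k \in roots_of G by case/andP: tik.
have [q qc rkq] := reach_pred (max_out_forest_root_reach (connect1 ck) mG rk) nkc.
have pc : (p, c) \in G by rewrite /p (parentE d1 qc).
split=> //.
- by move/rootsP: rk => /(_ c) /negbTE nck; rewrite !inE nck andbF.
- by move: (subsetP sG _ pc); rewrite inE => /andP [].
- exact: reroot_max mG rk ck pc.
rewrite (reroot_in_tree_of mG ck pc tik) /=.
apply: (reach_subset (subsetUr _ _)); apply: reach_setD1 (ac _ _ pc) _.
by rewrite /p (parentE d1 qc).
Qed.

(* Injective since k is the child of c, in the new forest, from which the old
   parent of c is reachable. *)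
Lemma reroot_weight_le i c :
  \sum_(q : 'I_n * {set 'I_n * 'I_n} | (q.1 != c) && MF q.2 && in_tree_of q.2 i q.1)
     a q.1 c * weight a q.2
  <= \sum_(q : 'I_n * {set 'I_n * 'I_n} | (q.1 != c) && MF q.2 && in_tree_of q.2 i c)
     a c q.1 * weight a q.2.
Proof.
apply: (ler_sum_inj (h := fun q => (parent q.2 c, (c, q.1) |: (q.2 :\ (parent q.2 c, c))))).
- move=> [p H] /andP [/andP [npc /max_out_forest_out fH] _] /=.
  by rewrite mulr_ge0 ?ha 1?eq_sym // ltW // weight_gt0.
- move=> [k1 G1] [k2 G2]; rewrite !inE /= !mulf_eq0 !negb_or.
  move=> /and3P [/andP [/andP [nk1 m1] t1] a1 _].
  move=> /and3P [/andP [/andP [nk2 m2] t2] a2 _] [E1 E2].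
  have [pc1 ni1 _ mH1 /andP [_ r1]] := rerootP nk1 a1 m1 t1.
  have [pc2 ni2 _ _ /andP [_ r2]] := rerootP nk2 a2 m2 t2.
  rewrite -E1 in pc2 ni2 E2 r2.
  case/out_forestP: (max_out_forest_out mH1) => _ d1H acH.
  have k12 : k1 = k2.
    apply: (child_reach_uniq d1H acH (setU11 _ _) _ r1); last by rewrite E2.
    by rewrite E2 setU11.
  by subst k2; congr pair; apply: setU1D1_inj pc1 pc2 ni1 ni2 E2.
- move=> [k G] /andP [/andP [nkc mG] tik]; rewrite mulf_eq0 negb_or => /andP [akc _] /=.
  have [pc ni npc mH /andP [tH _]] := rerootP nkc akc mG tik.
  by rewrite npc mH tH; split=> //; apply: weight_exchange pc ni.
Qed.

Lemma tree_weight_kirchhoff_ge0 i c : 0 <= \sum_k tree_weight i k * L k c.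
Proof.
have -> : \sum_k tree_weight i k * L k c =
    \sum_(k | k != c) a c k * tree_weight i c - \sum_(k | k != c) a k c * tree_weight i k.
  rewrite (bigD1 c) //= kirchhoffE eqxx mulr_sumr.
  congr (_ + _); first by apply: eq_bigr => k _; rewrite mulrC.
  rewrite -sumrN; apply: eq_bigr => k nkc.
  by rewrite kirchhoffE (negbTE nkc) mulrN mulrC.
rewrite subr_ge0 /tree_weight.
under eq_bigr do rewrite mulr_sumr.
under [leRHS]eq_bigr do rewrite mulr_sumr.
rewrite !pair_big /=.
under eq_bigr do rewrite mulrA.
under [leRHS]eq_bigr do rewrite mulrA.
by rewrite !sumr_mul_bool; apply: reroot_weight_le.
Qed.

Lemma kirchhoff_Jbar : L *m Jbar a = 0.
Proof.
apply: oppr_inj; rewrite oppr0; apply: mx_ge0_row_sum0 => [i j|i].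
  rewrite !mxE oppr_ge0; under eq_bigr do rewrite JbarE mulrA.
  by rewrite -mulr_suml pmulr_lle0 ?invr_gt0 ?forests_weight_gt0 ?kirchhoff_tree_weight_le0.
under eq_bigr do rewrite !mxE.
rewrite sumrN exchange_big /=.
under eq_bigr do rewrite -mulr_sumr Jbar_row_sum mulr1.
by rewrite kirchhoff_row_sum oppr0.
Qed.

Lemma Jbar_kirchhoff : Jbar a *m L = 0.
Proof.
apply: mx_ge0_row_sum0 => [i j|i].
  rewrite mxE; under eq_bigr do rewrite JbarE mulrAC.
  by rewrite -mulr_suml divr_ge0 ?tree_weight_kirchhoff_ge0 // ltW // forests_weight_gt0.
under eq_bigr do rewrite mxE.
rewrite exchange_big /= big1 // => k _.
by rewrite -mulr_sumr kirchhoff_row_sum mulr0.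
Qed.

(* L v = 0 makes v z a weighted mean of the values at the in-neighbours of z,
   so a maximum of |v| propagates backwards along arcs. *)
Lemma kirchhoff_harmonic_max (v : 'I_n -> R) m y z :
  (forall i, \sum_k L i k * v k = 0) -> (forall x, `|v x| <= `|v m|) ->
  (y, z) \in arcs a -> `|v z| = `|v m| -> `|v y| = `|v m|.
Proof.
move=> Lv vm yz vz; set M := `|v m| in vm vz *.
have nyz : y != z by move: yz; rewrite inE => /andP [].
have deg_ge0 : 0 <= \sum_(k | k != z) a z k.
  by apply: sumr_ge0 => k nkz; apply: ha; rewrite eq_sym.
have mean : (\sum_(k | k != z) a z k) * v z = \sum_(k | k != z) a z k * v k.
  move: (Lv z); rewrite (bigD1 z) //= kirchhoffE eqxx => /eqP; rewrite addr_eq0 => /eqP ->.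
  rewrite -sumrN; apply: eq_bigr => k nkz.
  by rewrite kirchhoffE eq_sym (negbTE nkz) mulNr opprK.
have gap_ge0 k : k != z -> 0 <= a z k * (M - `|v k|).
  by move=> nkz; rewrite mulr_ge0 ?ha 1?eq_sym // subr_ge0.
have gap_le0 : \sum_(k | k != z) a z k * (M - `|v k|) <= 0.
  under eq_bigr do rewrite mulrBr.
  rewrite sumrB -mulr_suml subr_le0 -vz -(ger0_norm deg_ge0) -normrM mean.
  apply: le_trans (ler_norm_sum _ _ _) _.
  by apply: ler_sum => k nkz; rewrite normrM ger0_norm // ha // eq_sym.
have gap0 : \sum_(k | k != z) a z k * (M - `|v k|) = 0.
  by apply/eqP; rewrite eq_le gap_le0 sumr_ge0.
have /eqP := psumr_eq0P gap_ge0 gap0 nyz.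
by rewrite mulf_eq0 (gt_eqF (arc_gt0 yz)) subr_eq0 => /eqP.
Qed.

Lemma kirchhoff_ker_roots0 F (v : 'I_n -> R) : out_forest a F ->
  (forall i, \sum_k L i k * v k = 0) -> (forall j, j \in roots_of F -> v j = 0) ->
  forall i, v i = 0.
Proof.
move=> /out_forestP [sF _ ac] Lv v0 i.
case: (@arg_maxP _ _ _ i predT (fun x => `|v x|) isT) => m _ vm.
have {}vm x : `|v x| <= `|v m| by apply: vm.
suff M0 : `|v m| = 0 by apply/eqP; rewrite -normr_le0 -M0 vm.
have [rho /andP [rrho rrm]] := in_tree_of_exists m ac.
have propagate x : reach F rho x -> `|v x| = `|v m| -> `|v rho| = `|v m|.
  move: x; apply: reach_ind => // y z _ yz IH vz; apply: IH.
  exact: kirchhoff_harmonic_max Lv vm (subsetP sF _ yz) vz.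
by rewrite -(propagate m rrm erefl) v0 ?normr0.
Qed.

Lemma Jbar_row_eq F0 j l : MF F0 -> j \in roots_of F0 -> Jbar a j l != 0 ->
  forall c, Jbar a l c = Jbar a j c.
Proof.
move=> m0 rj nz c.
have [G0 /andP [mG0 /andP [_ rlj]] | none] := pickP (fun G => MF G && in_tree_of G j l).
  have /out_forestP [sG0 _ _] := max_out_forest_out mG0.
  rewrite !JbarE /tree_weight; congr (_ / _); apply: eq_bigr => G mG.
  by rewrite (max_out_forest_same_tree c m0 rj (reach_subset sG0 rlj) mG).
move: nz; rewrite JbarE /tree_weight big1 ?mul0r ?eqxx // => G mG.
by move: (none G); rewrite mG /= => ->; rewrite mulr0.
Qed.

Lemma Jbar_idem : Jbar a *m Jbar a = Jbar a.
Proof.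
have [F0 m0] := max_out_forest_exists a.
apply/eqP; rewrite -subr_eq0; apply/eqP/matrixP => r c; rewrite [RHS]mxE.
pose v r := (Jbar a *m Jbar a - Jbar a) r c.
apply: (kirchhoff_ker_roots0 (v := v) (max_out_forest_out m0)) => [i|j rj].
  have : (L *m (Jbar a *m Jbar a - Jbar a)) i c = 0.
    by rewrite mulmxBr mulmxA kirchhoff_Jbar mul0mx subrr mxE.
  by rewrite mxE.
rewrite /v mxE mxE (eq_bigr (fun l => Jbar a j l * Jbar a j c)) => [|l _].
  by rewrite -mulr_suml Jbar_row_sum mul1r [X in _ + X]mxE subrr.
have [->|nz] := eqVneq (Jbar a j l) 0; first by rewrite !mul0r.
by rewrite (Jbar_row_eq m0 rj nz).
Qed.

Lemma mxtrace_Jbar F : MF F -> \tr (Jbar a) = #|roots_of F|%:R.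
Proof.
move=> mF; rewrite /mxtrace; under eq_bigr do rewrite JbarE.
rewrite -mulr_suml /tree_weight exchange_big /=.
rewrite (eq_bigr (fun G => weight a G * #|roots_of F|%:R)) => [|G mG].
  by rewrite -mulr_suml mulrAC divff ?mul1r // gt_eqF // forests_weight_gt0.
rewrite -mulr_sumr (card_roots_max_out_forest mF mG) -sumr_const.
congr (_ * _); rewrite [RHS]big_mkcond; apply: eq_bigr => i _.
by rewrite /in_tree_of connect0 andbT; case: ifP.
Qed.

End Kirchhoff.

Theorem proposition5 (R : realFieldType) (n : nat) (a : 'M[R]_n)
    (ha : forall i j : 'I_n, i != j -> 0 <= a i j) :
  (forall F : {set 'I_n * 'I_n}, max_out_forest a F ->
     \rank (Jbar a) = #|roots_of F|) /\
  Jbar a *m Jbar a = Jbar a /\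
  kirchhoff a *m Jbar a = 0 /\
  Jbar a *m kirchhoff a = 0.
Proof.
have JJ := Jbar_idem ha.
split=> [F mF|]; first by apply/eqP; rewrite -(eqr_nat R) (mxrank_idem JJ) (mxtrace_Jbar ha mF).
by split=> //; split; [exact: kirchhoff_Jbar | exact: Jbar_kirchhoff].
Qed.
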